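(* Let $D,\ell,\beta>0$ and $a>0$, and let $h$ solve $\omega_N^2h(x)+2\xi\omega_Nh'(x)+h''(x)=0$ with $h(0)=0$, $h'(0)=1$, where $\omega_N=\frac{\sqrt{a\beta}}{2}$ and $\xi=\frac{D\ell}{4}\sqrt{\beta/a}$. If $$a=\frac{D^2\ell^2\beta}{16}\Big(1-\tanh^2\Big(\frac{D^2\ell\beta}{8}\Big)\Big),$$ then $h'(x)>0$ and $h''(x)<0$ for all $x\in[0,D]$, and $$(h'(D))^{-1}=\frac{e^{D\omega_N\xi}}{\cosh(D\omega_N\sqrt{\xi^2-1})-\frac{\xi}{\sqrt{\xi^2-1}}\sinh(D\omega_N\sqrt{\xi^2-1})}.$$ If $D^2\ell\beta<8$ and $a=\frac{4}{D^2\beta}$, then $h'(x)>0$ and $h''(x)<0$ for all $x\in[0,D]$, and $$(h'(D))^{-1}=\frac{e^{D\omega_N\xi}}{\cos(D\omega_N\sqrt{1-\xi^2})-\frac{\xi}{\sqrt{1-\xi^2}}\sin(D\omega_N\sqrt{1-\xi^2})}.$$ *)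

From Stdlib Require Import Reals.
Open Scope R_scope.

Definition omegaN (a beta : R) : R := sqrt (a * beta) / 2.
Definition xiN (D l beta a : R) : R := D * l / 4 * sqrt (beta / a).

From Stdlib Require Import Reals Lra Psatz.
From Coquelicot Require Import Coquelicot.
Open Scope R_scope.

(* The problem is the damped oscillator h'' + 2 xi w h' + w^2 h = 0 started at
   h(0) = 0, h'(0) = 1; its energy h'^2 + w^2 h^2 is nonincreasing, so h is the
   explicit solution e^(-w xi x) sinh(w s x)/(w s) with s = sqrt(xi^2 - 1)
   (resp. sin and s = sqrt(1 - xi^2)).  Note that w xi = D l beta / 8 whatever a
   is.  Put c = D^2 l beta / 8.  In the first case xi = cosh c, s = sinh c and
   h'(x) = e^(-w xi x) sinh(c - w s x) / sinh c, positive since w s D = c tanh c < c.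
   In the second case w D = 1 and, writing xi = cos θ, s = sin θ, the factor is
   sin(θ - w s x) / sin θ, positive since w s x <= sin θ < θ.  Finally h >= 0 while
   h' > 0, so the equation gives h'' < 0. *)

Definition damped_oscillator (w xi : R) (g g1 g2 : R -> R) : Prop :=
  (forall x, derivable_pt_lim g x (g1 x)) /\
  (forall x, derivable_pt_lim g1 x (g2 x)) /\
  (forall x, w ^ 2 * g x + 2 * xi * w * g1 x + g2 x = 0).

Section DampedOscillator.

Variables w xi : R.
Hypothesis w_pos : 0 < w.
Hypothesis xi_pos : 0 < xi.

Lemma damped_oscillator_sub (g g1 g2 u u1 u2 : R -> R) :
  damped_oscillator w xi g g1 g2 -> damped_oscillator w xi u u1 u2 ->
  damped_oscillator w xi (fun x => g x - u x) (fun x => g1 x - u1 x)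
    (fun x => g2 x - u2 x).
Proof.
  intros [dg [dg1 odeg]] [du [du1 odeu]].
  split; [|split]; intro x.
  - now apply derivable_pt_lim_minus.
  - now apply derivable_pt_lim_minus.
  - specialize (odeg x); specialize (odeu x); lra.
Qed.

Lemma damped_oscillator_energy_derive (g g1 g2 : R -> R) x :
  damped_oscillator w xi g g1 g2 ->
  derivable_pt_lim (fun t => g1 t ^ 2 + w ^ 2 * g t ^ 2) x
    (- (4 * xi * w * g1 x ^ 2)).
Proof.
  intros [dg [dg1 ode]].
  apply is_derive_Reals.
  replace (- (4 * xi * w * g1 x ^ 2))
    with (INR 2 * g2 x * g1 x ^ 1 + w ^ 2 * (INR 2 * g1 x * g x ^ 1))
    by (specialize (ode x); simpl; nra).
  apply (is_derive_plus (fun t => g1 t ^ 2) (fun t => w ^ 2 * g t ^ 2));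
    [|apply (is_derive_scal (fun t => g t ^ 2))];
    apply is_derive_pow, is_derive_Reals; auto.
Qed.

(* The energy [g'^2 + w^2 g^2] is nonincreasing, so it stays zero. *)
Lemma damped_oscillator_zero_data (g g1 g2 : R -> R) x :
  damped_oscillator w xi g g1 g2 -> g 0 = 0 -> g1 0 = 0 -> 0 <= x ->
  g x = 0 /\ g1 x = 0.
Proof.
  intros osc g0 g10 hx.
  assert (energy_le : g1 x ^ 2 + w ^ 2 * g x ^ 2 <= 0).
  { destruct (Req_dec x 0) as [->|hx0]; [rewrite g0, g10; lra|].
    destruct (MVT_cor2 _ _ 0 x ltac:(lra)
                (fun c _ => damped_oscillator_energy_derive g g1 g2 c osc))
      as [c [Hc _]].
    rewrite g0, g10 in Hc.
    assert (0 <= xi * w * g1 c ^ 2) by (apply Rmult_le_pos; nra).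
    nra. }
  assert (0 <= w ^ 2 * g x ^ 2) by (apply Rmult_le_pos; nra).
  assert (g1 x ^ 2 = 0 /\ w ^ 2 * g x ^ 2 = 0) as [G1 G] by nra.
  apply Rmult_integral in G as [W|G]; split; nra.
Qed.

Lemma damped_oscillator_unique (g g1 g2 u u1 u2 : R -> R) x :
  damped_oscillator w xi g g1 g2 -> damped_oscillator w xi u u1 u2 ->
  g 0 = u 0 -> g1 0 = u1 0 -> 0 <= x -> g1 x = u1 x.
Proof.
  intros oscg oscu e0 e1 hx.
  destruct (damped_oscillator_zero_data _ _ _ x
              (damped_oscillator_sub _ _ _ _ _ _ oscg oscu)) as [_ E];
    cbv beta; lra.
Qed.

(* While the velocity stays positive the position stays nonnegative. *)
Lemma damped_oscillator_concave (g g1 g2 : R -> R) D x :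
  damped_oscillator w xi g g1 g2 -> g 0 = 0 ->
  (forall t, 0 <= t <= D -> 0 < g1 t) -> 0 <= x <= D -> g2 x < 0.
Proof.
  intros [dg [_ ode]] g0 g1_pos hx.
  assert (g_nonneg : 0 <= g x).
  { destruct (Req_dec x 0) as [->|hx0]; [lra|].
    rewrite <- g0.
    apply Rlt_le, (incr_function_le g 0 D g1); simpl; try lra.
    - intros t ht _; apply is_derive_Reals, dg.
    - intros t ht1 ht2; apply g1_pos; lra. }
  specialize (ode x); specialize (g1_pos x hx).
  assert (0 < xi * w * g1 x) by (apply Rmult_lt_0_compat; nra).
  assert (0 <= w ^ 2 * g x) by (apply Rmult_le_pos; nra).
  lra.
Qed.

Lemma damped_oscillator_shape (g g1 g2 u u1 u2 : R -> R) D :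
  damped_oscillator w xi g g1 g2 -> damped_oscillator w xi u u1 u2 ->
  g 0 = 0 -> g1 0 = 1 -> u 0 = 0 -> u1 0 = 1 -> 0 <= D ->
  (forall x, 0 <= x <= D -> 0 < u1 x) ->
  (forall x, 0 <= x <= D -> 0 < g1 x /\ g2 x < 0) /\ g1 D = u1 D.
Proof.
  intros oscg oscu g0 g10 u0 u10 hD u1_pos.
  assert (E : forall x, 0 <= x -> g1 x = u1 x)
    by (intros; eapply damped_oscillator_unique; eauto; congruence).
  assert (g1_pos : forall x, 0 <= x <= D -> 0 < g1 x)
    by (intros x hx; rewrite E by lra; auto).
  split; [|now apply E].
  intros x hx; split; [auto|].
  now apply (damped_oscillator_concave g g1 g2 D).
Qed.

End DampedOscillator.

Lemma Rinv_exp_neg_mul t z : / (exp (- t) * z) = exp t / z.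
Proof. now rewrite Rinv_mult, <- exp_Ropp, Ropp_involutive. Qed.

Lemma cosh_pos c : 0 < cosh c.
Proof. unfold cosh; pose proof (exp_pos c); pose proof (exp_pos (- c)); lra. Qed.

Lemma sinh_pos c : 0 < c -> 0 < sinh c.
Proof. intro hc; rewrite <- sinh_0; now apply sinh_lt. Qed.

Lemma sinh_lt_cosh c : sinh c < cosh c.
Proof. unfold sinh, cosh; pose proof (exp_pos (- c)); lra. Qed.

Lemma cosh_sq_sub_sinh_sq c : cosh c ^ 2 - sinh c ^ 2 = 1.
Proof. unfold cosh, sinh; rewrite exp_Ropp; pose proof (exp_pos c); field; lra. Qed.

Lemma one_sub_tanh_sq c : 1 - tanh c ^ 2 = / cosh c ^ 2.
Proof.
  unfold tanh; pose proof (cosh_pos c).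
  replace (1 - (sinh c / cosh c) ^ 2) with ((cosh c ^ 2 - sinh c ^ 2) / cosh c ^ 2)
    by (field; lra).
  rewrite cosh_sq_sub_sinh_sq; field; lra.
Qed.

Lemma sinh_sub x y : sinh (x - y) = sinh x * cosh y - cosh x * sinh y.
Proof.
  unfold sinh, cosh, Rminus; rewrite Ropp_plus_distr, Ropp_involutive.
  rewrite !exp_plus; field.
Qed.

Definition overdamped_sol (w xi s x : R) : R :=
  exp (- (x * w * xi)) * sinh (x * w * s) / (w * s).

Definition overdamped_dsol (w xi s x : R) : R :=
  exp (- (x * w * xi)) * (cosh (x * w * s) - xi / s * sinh (x * w * s)).

Definition underdamped_sol (w xi s x : R) : R :=
  exp (- (x * w * xi)) * sin (x * w * s) / (w * s).

Definition underdamped_dsol (w xi s x : R) : R :=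
  exp (- (x * w * xi)) * (cos (x * w * s) - xi / s * sin (x * w * s)).

Lemma overdamped_sol_oscillator w xi s :
  0 < w -> 0 < s -> s ^ 2 = xi ^ 2 - 1 ->
  damped_oscillator w xi (overdamped_sol w xi s) (overdamped_dsol w xi s)
    (fun x => - (w ^ 2 * overdamped_sol w xi s x
                 + 2 * xi * w * overdamped_dsol w xi s x)).
Proof.
  intros hw hs hs2; split; [|split]; intro x; try ring;
    apply is_derive_Reals; unfold overdamped_sol, overdamped_dsol, sinh, cosh;
    auto_derive; auto.
  - field; lra.
  - apply Rminus_diag_uniq.
    transitivity (exp (- (x * w * xi)) * ((exp (x * w * s) - exp (- (x * w * s))) / 2)
                  * w * (s ^ 2 - xi ^ 2 + 1) / s); [field; lra|].
    rewrite hs2; field; lra.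
Qed.

Lemma underdamped_sol_oscillator w xi s :
  0 < w -> 0 < s -> s ^ 2 = 1 - xi ^ 2 ->
  damped_oscillator w xi (underdamped_sol w xi s) (underdamped_dsol w xi s)
    (fun x => - (w ^ 2 * underdamped_sol w xi s x
                 + 2 * xi * w * underdamped_dsol w xi s x)).
Proof.
  intros hw hs hs2; split; [|split]; intro x; try ring;
    apply is_derive_Reals; unfold underdamped_sol, underdamped_dsol;
    auto_derive; auto.
  - field; lra.
  - apply Rminus_diag_uniq.
    transitivity (exp (- (x * w * xi)) * sin (x * w * s) * w * (1 - xi ^ 2 - s ^ 2) / s);
      [field; lra|].
    rewrite hs2; field; lra.
Qed.

Lemma overdamped_oscillator_shape w c D xi s (h h1 h2 : R -> R) :
  0 < w -> 0 < c -> 0 < D -> xi = cosh c -> s = sinh c -> D * w * s < c ->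
  damped_oscillator w xi h h1 h2 -> h 0 = 0 -> h1 0 = 1 ->
  (forall x, 0 <= x <= D -> 0 < h1 x /\ h2 x < 0) /\
  / h1 D = exp (D * w * xi) / (cosh (D * w * s) - xi / s * sinh (D * w * s)).
Proof.
  intros hw hc hD -> -> hDc osc h0 h10.
  pose proof (sinh_pos c hc) as hs.
  assert (dsol_pos : forall x, 0 <= x <= D ->
                      0 < overdamped_dsol w (cosh c) (sinh c) x).
  { intros x hx; unfold overdamped_dsol.
    apply Rmult_lt_0_compat; [apply exp_pos|].
    assert (hy : x * w * sinh c < c)
      by (apply Rle_lt_trans with (D * w * sinh c); [|lra];
          apply Rmult_le_compat_r, Rmult_le_compat_r; lra).
    replace (cosh (x * w * sinh c) - cosh c / sinh c * sinh (x * w * sinh c))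
      with (sinh (c - x * w * sinh c) / sinh c) by (rewrite sinh_sub; field; lra).
    apply Rdiv_lt_0_compat; [apply sinh_pos|]; lra. }
  destruct (damped_oscillator_shape w (cosh c) hw (cosh_pos c) h h1 h2 _ _ _ D
              osc (overdamped_sol_oscillator w (cosh c) (sinh c) hw hs
                     ltac:(pose proof (cosh_sq_sub_sinh_sq c); lra)))
    as [shape E]; auto; try lra.
  - unfold overdamped_sol; rewrite !Rmult_0_l, sinh_0; lra.
  - unfold overdamped_dsol; rewrite !Rmult_0_l, Ropp_0, exp_0, cosh_0, sinh_0; ring.
  - split; [exact shape|]; rewrite E; apply Rinv_exp_neg_mul.
Qed.

Lemma underdamped_oscillator_shape w θ D xi s (h h1 h2 : R -> R) :
  0 < w -> 0 < θ < PI / 2 -> 0 < D -> xi = cos θ -> s = sin θ -> D * w * s < θ ->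
  damped_oscillator w xi h h1 h2 -> h 0 = 0 -> h1 0 = 1 ->
  (forall x, 0 <= x <= D -> 0 < h1 x /\ h2 x < 0) /\
  / h1 D = exp (D * w * xi) / (cos (D * w * s) - xi / s * sin (D * w * s)).
Proof.
  intros hw hθ hD -> -> hDθ osc h0 h10.
  pose proof PI2_1.
  assert (hs : 0 < sin θ) by (apply sin_gt_0; lra).
  assert (hxi : 0 < cos θ) by (apply cos_gt_0; lra).
  assert (dsol_pos : forall x, 0 <= x <= D ->
                      0 < underdamped_dsol w (cos θ) (sin θ) x).
  { intros x hx; unfold underdamped_dsol.
    apply Rmult_lt_0_compat; [apply exp_pos|].
    assert (hy : 0 <= x * w * sin θ <= D * w * sin θ)
      by (split; [apply Rmult_le_pos; [apply Rmult_le_pos|]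
                 | apply Rmult_le_compat_r, Rmult_le_compat_r]; lra).
    replace (cos (x * w * sin θ) - cos θ / sin θ * sin (x * w * sin θ))
      with (sin (θ - x * w * sin θ) / sin θ) by (rewrite sin_minus; field; lra).
    apply Rdiv_lt_0_compat; [apply sin_gt_0|]; lra. }
  destruct (damped_oscillator_shape w (cos θ) hw hxi h h1 h2 _ _ _ D
              osc (underdamped_sol_oscillator w (cos θ) (sin θ) hw hs
                     ltac:(pose proof (sin2_cos2 θ); unfold Rsqr in *; lra)))
    as [shape E]; auto; try lra.
  - unfold underdamped_sol; rewrite !Rmult_0_l, sin_0; lra.
  - unfold underdamped_dsol; rewrite !Rmult_0_l, Ropp_0, exp_0, cos_0, sin_0; ring.
  - split; [exact shape|]; rewrite E; apply Rinv_exp_neg_mul.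
Qed.

Lemma omegaN_pos a beta : 0 < a -> 0 < beta -> 0 < omegaN a beta.
Proof.
  intros; unfold omegaN; apply Rdiv_lt_0_compat; [apply sqrt_lt_R0, Rmult_lt_0_compat|]; lra.
Qed.

Lemma omegaN_eq a beta w : 0 <= w -> a * beta = 4 * w ^ 2 -> omegaN a beta = w.
Proof.
  intros hw E; unfold omegaN; rewrite E.
  replace (4 * w ^ 2) with ((2 * w) ^ 2) by ring.
  rewrite sqrt_pow2; lra.
Qed.

Lemma omegaN_mul_xiN D l beta a :
  0 < a -> 0 < beta -> omegaN a beta * xiN D l beta a = D * l * beta / 8.
Proof.
  intros ha hbeta; unfold omegaN, xiN.
  replace (sqrt (a * beta) / 2 * (D * l / 4 * sqrt (beta / a)))
    with (D * l / 8 * (sqrt (a * beta) * sqrt (beta / a))) by field.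
  rewrite <- sqrt_mult; [|apply Rlt_le, Rmult_lt_0_compat; lra
                       |apply Rlt_le, Rdiv_lt_0_compat; lra].
  replace (a * beta * (beta / a)) with (beta ^ 2) by (field; lra).
  rewrite sqrt_pow2; lra.
Qed.

Lemma overdamped_parameters D l beta a :
  0 < D -> 0 < l -> 0 < beta -> 0 < a ->
  a = D ^ 2 * l ^ 2 * beta / 16 * (1 - tanh (D ^ 2 * l * beta / 8) ^ 2) ->
  xiN D l beta a = cosh (D ^ 2 * l * beta / 8) /\
  sqrt (xiN D l beta a ^ 2 - 1) = sinh (D ^ 2 * l * beta / 8) /\
  D * omegaN a beta * sinh (D ^ 2 * l * beta / 8) < D ^ 2 * l * beta / 8.
Proof.
  intros hD hl hbeta ha Ha.
  set (c := D ^ 2 * l * beta / 8) in *.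
  assert (Ec : D ^ 2 * l * beta / 8 = c) by reflexivity; clearbody c.
  rewrite one_sub_tanh_sq in Ha.
  assert (hc : 0 < c)
    by (rewrite <- Ec; apply Rdiv_lt_0_compat; [repeat apply Rmult_lt_0_compat|]; nra).
  pose proof (cosh_pos c); pose proof (sinh_pos c hc); pose proof (sinh_lt_cosh c).
  assert (Hw : omegaN a beta = D * l * beta / (8 * cosh c)).
  { apply omegaN_eq; [apply Rlt_le, Rdiv_lt_0_compat; nra|].
    rewrite Ha; field; lra. }
  assert (Hxi : xiN D l beta a = cosh c).
  { apply (Rmult_eq_reg_l (omegaN a beta)); [|apply Rgt_not_eq, omegaN_pos; lra].
    rewrite omegaN_mul_xiN, Hw by lra; field; lra. }
  split; [|split]; [exact Hxi| |].
  - rewrite Hxi, <- (cosh_sq_sub_sinh_sq c).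
    replace (cosh c ^ 2 - (cosh c ^ 2 - sinh c ^ 2)) with (sinh c ^ 2) by ring.
    apply sqrt_pow2; lra.
  - apply Rlt_le_trans with (D * omegaN a beta * cosh c).
    + apply Rmult_lt_compat_l; [|easy]; apply Rmult_lt_0_compat; [|apply omegaN_pos]; lra.
    + right; rewrite Hw; transitivity (D ^ 2 * l * beta / 8); [field; lra | exact Ec].
Qed.

Lemma underdamped_parameters D l beta a :
  0 < D -> 0 < beta -> a = 4 / (D ^ 2 * beta) ->
  D * omegaN a beta = 1 /\ xiN D l beta a = D ^ 2 * l * beta / 8.
Proof.
  intros hD hbeta Ha.
  assert (ha : 0 < a)
    by (rewrite Ha; apply Rdiv_lt_0_compat, Rmult_lt_0_compat; [|apply pow_lt|]; lra).
  assert (Hw : omegaN a beta = 1 / D)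
    by (apply omegaN_eq; [apply Rlt_le, Rdiv_lt_0_compat|rewrite Ha; field]; lra).
  split; [rewrite Hw; field; lra|].
  apply (Rmult_eq_reg_l (omegaN a beta)); [|apply Rgt_not_eq, omegaN_pos; lra].
  rewrite omegaN_mul_xiN, Hw by lra; field; lra.
Qed.

Lemma acos_angle xi :
  0 < xi < 1 -> exists θ, 0 < θ < PI / 2 /\ xi = cos θ /\ sqrt (1 - xi ^ 2) = sin θ.
Proof.
  intros hxi; exists (acos xi).
  assert (hbound : 0 < acos xi < PI) by (apply acos_bound_lt; lra).
  assert (hcos : cos (acos xi) = xi) by (apply cos_acos; lra).
  split; [split; [lra|]|split; [easy|]].
  - destruct (Rlt_or_le (acos xi) (PI / 2)) as [|hge]; [easy|].
    pose proof (cos_le_0 (acos xi) hge ltac:(lra)); lra.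
  - rewrite sin_acos by lra; now rewrite Rsqr_pow2.
Qed.

Theorem lemma13 (D l beta a : R) (h h1 h2 : R -> R)
  (hD : 0 < D) (hl : 0 < l) (hbeta : 0 < beta) (ha : 0 < a)
  (Hd1 : forall x, derivable_pt_lim h x (h1 x))
  (Hd2 : forall x, derivable_pt_lim h1 x (h2 x))
  (Hode : forall x, (omegaN a beta) ^ 2 * h x
                    + 2 * xiN D l beta a * omegaN a beta * h1 x + h2 x = 0)
  (H0 : h 0 = 0) (H1 : h1 0 = 1) :
  (a = D ^ 2 * l ^ 2 * beta / 16 * (1 - (tanh (D ^ 2 * l * beta / 8)) ^ 2) ->
     (forall x, 0 <= x <= D -> 0 < h1 x /\ h2 x < 0) /\
     / h1 D = exp (D * omegaN a beta * xiN D l beta a) /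
       (cosh (D * omegaN a beta * sqrt ((xiN D l beta a) ^ 2 - 1))
        - xiN D l beta a / sqrt ((xiN D l beta a) ^ 2 - 1)
          * sinh (D * omegaN a beta * sqrt ((xiN D l beta a) ^ 2 - 1))))
  /\
  (D ^ 2 * l * beta < 8 -> a = 4 / (D ^ 2 * beta) ->
     (forall x, 0 <= x <= D -> 0 < h1 x /\ h2 x < 0) /\
     / h1 D = exp (D * omegaN a beta * xiN D l beta a) /
       (cos (D * omegaN a beta * sqrt (1 - (xiN D l beta a) ^ 2))
        - xiN D l beta a / sqrt (1 - (xiN D l beta a) ^ 2)
          * sin (D * omegaN a beta * sqrt (1 - (xiN D l beta a) ^ 2)))).
Proof.
  pose proof (omegaN_pos a beta ha hbeta) as hw.
  assert (osc : damped_oscillator (omegaN a beta) (xiN D l beta a) h h1 h2)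
    by (repeat split; assumption).
  assert (hc : 0 < D ^ 2 * l * beta / 8)
    by (apply Rdiv_lt_0_compat; [repeat apply Rmult_lt_0_compat|]; nra).
  split.
  - intro Ha.
    destruct (overdamped_parameters D l beta a hD hl hbeta ha Ha) as [Hxi [Hs Hc]].
    apply (overdamped_oscillator_shape _ (D ^ 2 * l * beta / 8) _ _ _ h);
      try rewrite Hs; auto.
  - intros Hsmall Ha.
    destruct (underdamped_parameters D l beta a hD hbeta Ha) as [Hw Hxi].
    destruct (acos_angle (xiN D l beta a)) as [θ [hθ [Hcos Hsin]]]; [lra|].
    apply (underdamped_oscillator_shape _ θ _ _ _ h); auto.
    rewrite Hsin, Hw, Rmult_1_l; apply sin_lt_x; lra.
Qed.
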